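(* Let $N$ be an odd positive integer and $r\ge s\ge 2$. Then the Atkin operator $U$ and the nebentypus action of $\Gamma$ on $(\Phi_r^s)^{\mathrm{ab}}$ commute.
   Context: For $M\ge1$, $\Gamma_1(M)=\{\begin{pmatrix}a&b\\c&d\end{pmatrix}\in\mathrm{SL}_2(\mathbb{Z}) : c\equiv0,\ a\equiv d\equiv1 \pmod M\}$, $\Gamma_0(M)=\{c\equiv 0\pmod M\}$, $\Gamma^0(2)=\{b\equiv0\pmod 2\}$ (inside $\mathrm{SL}_2(\mathbb{Z})$). For $r\ge s\ge2$, $\Phi_r^s:=\Gamma_1(N2^s)\cap\Gamma_0(2^r)$; $G^{\mathrm{ab}}$ denotes abelianization. $\Gamma:=1+4\mathbb{Z}_2$, $\Gamma_r:=1+2^r\mathbb{Z}_2$. Nebentypus action: for $\delta\in\Gamma$, choose $\alpha=\begin{pmatrix}a&b\\c&d\end{pmatrix}\in\Gamma_1(4N)\cap\Gamma_0(2^{r+1})\cap\Gamma^0(2)$ with $d\equiv\delta \bmod \Gamma_r$ (such $\alpha$ exists); $\delta$ acts on $(\Phi_r^s)^{\mathrm{ab}}$ by the map induced by conjugation $x\mapsto\alpha x\alpha^{-1}$, which is independent of the choice of $\alpha$. Atkin operator: with $t=\begin{pmatrix}1&0\\0&2\end{pmatrix}$, $U$ on $(\Phi_r^s)^{\mathrm{ab}}$ is the composite of the transfer $(\Phi_r^s)^{\mathrm{ab}}\to(\Phi_r^s\cap\Gamma^0(2))^{\mathrm{ab}}$, the map induced by the isomorphism $x\mapsto txt^{-1}$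 from $\Phi_r^s\cap\Gamma^0(2)$ onto $\Phi_{r+1}^s$, and the inclusion-induced map $(\Phi_{r+1}^s)^{\mathrm{ab}}\to(\Phi_r^s)^{\mathrm{ab}}$. *)

From HB Require Import structures.
From mathcomp Require Import all_boot all_order all_algebra.
Set Implicit Arguments. Unset Strict Implicit. Unset Printing Implicit Defensive.
Import GRing.Theory Num.Theory.
Local Open Scope ring_scope.

Notation M2 := 'M[int]_2.

Definition i0 : 'I_2 := ord0.
Definition i1 : 'I_2 := ord_max.

Definition mk2 (a b c d : int) : M2 :=
  \matrix_(i < 2, j < 2)
    if (val i == 0)%N then (if (val j == 0)%N then a else b)
    else (if (val j == 0)%N then c else d).

Definition inSL2 (A : M2) : bool := \det A == 1.

Definition inGamma1 (M : nat) (A : M2) : bool :=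
  [&& inSL2 A, (A i1 i0 == 0 %[mod M%:Z])%Z, (A i0 i0 == 1 %[mod M%:Z])%Z
    & (A i1 i1 == 1 %[mod M%:Z])%Z].

Definition inGamma0 (M : nat) (A : M2) : bool :=
  inSL2 A && (A i1 i0 == 0 %[mod M%:Z])%Z.

Definition inGamma0up2 (A : M2) : bool :=
  inSL2 A && (A i0 i1 == 0 %[mod 2])%Z.

Definition inPhi (N r s : nat) (A : M2) : bool :=
  inGamma1 (N * 2 ^ s) A && inGamma0 (2 ^ r) A.

Definition commg2 (a b : M2) : M2 := invmx a *m invmx b *m a *m b.

(** The commutator subgroup [G,G] of a subgroup G (given by its membership
    predicate): all finite products of commutators of elements of G
    (closed under inverses since [a,b]^-1 = [b,a]). *)
Inductive in_commsub (G : pred M2) : M2 -> Prop :=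
  | commsub1 : in_commsub G 1%:M
  | commsubM a b y : G a -> G b -> in_commsub G y ->
      in_commsub G (commg2 a b *m y).

Definition ab_eq (G : pred M2) (x y : M2) : Prop :=
  in_commsub G (x *m invmx y).

Definition right_transversal (G H : pred M2) (T : seq M2) : Prop :=
  all G T /\ forall y, G y -> count (fun g => H (y *m invmx g)) T = 1%N.

(** Representative of the transfer of x from G to H computed with the right
    transversal T: for each g in T, g x = h_g g' with g' the element of T
    such that g x g'^-1 lies in H; the transfer is the product of the h_g
    (its class in H^ab does not depend on ordering/transversal). *)
Definition transfer_rep (H : pred M2) (T : seq M2) (x : M2) : M2 :=
  foldr (fun g acc =>
    (g *m x *m invmx (nth 1%:M T (find (fun g' => H (g *m x *m invmx g')) T)))
      *m acc) 1%:M T.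

(** Conjugation by t = diag(1,2): [[a,b],[c,d]] |-> [[a, b/2],[2c, d]]
    (integral on Gamma^0(2)). *)
Definition tconj (A : M2) : M2 :=
  mk2 (A i0 i0) ((A i0 i1) %/ 2)%Z (A i1 i0 * 2) (A i1 i1).

(** Representative of the Atkin operator U on (Phi_r^s)^ab, computed with a
    right transversal T of Phi_r^s cap Gamma^0(2) in Phi_r^s: transfer,
    then conjugation by t (landing in Phi_{r+1}^s), then (implicitly) the
    inclusion Phi_{r+1}^s -> Phi_r^s. *)
Definition atkinU_rep (N r s : nat) (T : seq M2) (x : M2) : M2 :=
  tconj (transfer_rep (fun A => inPhi N r s A && inGamma0up2 A) T x).

Definition nebentypus_alpha (N r : nat) (delta : int) (alpha : M2) : bool :=
  [&& inGamma1 (4 * N) alpha, inGamma0 (2 ^ r.+1) alpha, inGamma0up2 alpha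
    & (alpha i1 i1 == delta %[mod (2 ^ r)%:Z])%Z].

From mathcomp Require Import all_boot all_order all_algebra.
From mathcomp Require Import ring zify.
Set Implicit Arguments. Unset Strict Implicit. Unset Printing Implicit Defensive.
Import GRing.Theory.
Local Open Scope ring_scope.

(* Parity of the upper-right entry is a character of Phi = Phi_r^s (all its
   elements have c even, hence a and d odd) whose kernel is Phi cap Gamma^0(2),
   of index 2.  For an index-2 subgroup the transfer is computed from a
   two-element transversal {x1, x2}, and conjugating by alpha (which normalises
   Phi and preserves the parity) changes each factor only by the kernel
   elements alpha g alpha^-1 g^-1, g in {x1, x2}, which cancel in the
   abelianisation; so the transfer commutes with conjugation by alpha.
   Conjugation by t = diag(1,2) is a homomorphism from the kernel to Phi, and
   t alpha t^-1 = beta alpha with beta in Phi; conjugation by beta is trivial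
   on Phi^ab. *)

Section InvMx.
Variables (R : comUnitRingType) (n : nat).
Implicit Types A B z : 'M[R]_n.

Lemma invmx_eq_rinv A B : A \in unitmx -> A *m B = 1%:M -> invmx A = B.
Proof. by move=> uA AB; rewrite -[B](mulKmx uA) AB mulmx1. Qed.

Lemma invmx_mul A B : A \in unitmx -> B \in unitmx ->
  invmx (A *m B) = invmx B *m invmx A.
Proof.
move=> uA uB; apply: invmx_eq_rinv; first by rewrite unitmx_mul uA uB.
by rewrite !mulmxA (mulmxK uB) (mulmxV uA).
Qed.

Lemma invmx_conj z A : z \in unitmx -> A \in unitmx ->
  invmx (z *m A *m invmx z) = z *m invmx A *m invmx z.
Proof.
move=> uz uA; apply: invmx_eq_rinv; first by rewrite !unitmx_mul uz uA unitmx_inv.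
by rewrite !mulmxA (mulmxKV uz) (mulmxK uA) (mulmxV uz).
Qed.

End InvMx.

Lemma mk2_00 a b c d : mk2 a b c d i0 i0 = a. Proof. by rewrite mxE. Qed.
Lemma mk2_01 a b c d : mk2 a b c d i0 i1 = b. Proof. by rewrite mxE. Qed.
Lemma mk2_10 a b c d : mk2 a b c d i1 i0 = c. Proof. by rewrite mxE. Qed.
Lemma mk2_11 a b c d : mk2 a b c d i1 i1 = d. Proof. by rewrite mxE. Qed.
Definition mk2E := (mk2_00, mk2_01, mk2_10, mk2_11).

Lemma mk2_eta (A : M2) : A = mk2 (A i0 i0) (A i0 i1) (A i1 i0) (A i1 i1).
Proof.
apply/matrixP => i j; rewrite !mxE.
by case: i => [[|[|//]] ?]; case: j => [[|[|//]] ?]; congr (A _ _); apply: val_inj.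
Qed.

Lemma mul_mk2 a b c d a' b' c' d' :
  mk2 a b c d *m mk2 a' b' c' d' =
  mk2 (a * a' + b * c') (a * b' + b * d') (c * a' + d * c') (c * b' + d * d').
Proof.
apply/matrixP => i j; rewrite !mxE !big_ord_recr big_ord0 /= !mxE /=.
by case: i => [[|[|//]] ?]; case: j => [[|[|//]] ?]; rewrite /= add0r.
Qed.

Lemma mx1_mk2 : 1%:M = mk2 1 0 0 1 :> M2.
Proof.
apply/matrixP => i j; rewrite !mxE.
by case: i => [[|[|//]] ?]; case: j => [[|[|//]] ?].
Qed.

Lemma det_mk2 a b c d : \det (mk2 a b c d) = a * d - b * c.
Proof.
rewrite (expand_det_row _ ord0) !big_ord_recr big_ord0 /= add0r.
by rewrite /cofactor !det_mx11 !mxE /= expr0 expr1; ring.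
Qed.

Lemma inSL2E (A : M2) :
  inSL2 A = (A i0 i0 * A i1 i1 - A i0 i1 * A i1 i0 == 1).
Proof. by rewrite /inSL2 {1}(mk2_eta A) det_mk2. Qed.

Lemma SL2_unitmx (A : M2) : inSL2 A -> A \in unitmx.
Proof. by rewrite /inSL2 unitmxE => /eqP ->; exact: unitr1. Qed.

Lemma invmx_mk2 a b c d :
  a * d - b * c = 1 -> invmx (mk2 a b c d) = mk2 d (- b) (- c) a.
Proof.
move=> det1; apply: invmx_eq_rinv; first by rewrite SL2_unitmx // /inSL2 det_mk2 det1.
by rewrite mul_mk2 mx1_mk2; congr mk2; rewrite -?det1; ring.
Qed.

Definition congz (x y m : int) := exists k, x = y + k * m.

Lemma congzP x y m : (x == y %[mod m])%Z <-> congz x y m.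
Proof.
rewrite eqz_mod_dvd; split; first by case/dvdzP=> q Hq; exists q; rewrite -Hq; ring.
by case=> k ->; apply/dvdzP; exists k; ring.
Qed.

Lemma congz_refl x m : congz x x m. Proof. by exists 0; ring. Qed.

Lemma congz_trans x y z m : congz x y m -> congz y z m -> congz x z m.
Proof. by move=> [k ->] [k' ->]; exists (k + k'); ring. Qed.

Lemma congzD x y x' y' m : congz x y m -> congz x' y' m -> congz (x + x') (y + y') m.
Proof. by move=> [k ->] [k' ->]; exists (k + k'); ring. Qed.

Lemma congzM x y x' y' m : congz x y m -> congz x' y' m -> congz (x * x') (y * y') m.
Proof. by move=> [k ->] [k' ->]; exists (k * y' + y * k' + k * k' * m); ring. Qed.

Lemma congzN x y m : congz x y m -> congz (- x) (- y) m.
Proof. by move=> [k ->]; exists (- k); ring. Qed.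

Lemma congz_eqr x y y' m : congz x y m -> y = y' -> congz x y' m.
Proof. by move=> ? <-. Qed.

(* [congz_ring] proves [congz e e' m] when [e'] is, up to [ring], the
   polynomial [e] in which hypotheses [congz x y m] replaced [x] by [y]. *)
Ltac congz_close := first
  [ eapply congzD; [congz_close | congz_close]
  | eapply congzM; [congz_close | congz_close]
  | eapply congzN; congz_close
  | eassumption | apply: congz_refl ].
Ltac congz_ring := eapply congz_eqr; [congz_close | ring].

Definition is_subgroup (G : pred M2) :=
  [/\ forall A, G A -> inSL2 A, G 1%:M,
      forall A B, G A -> G B -> G (A *m B) & forall A, G A -> G (invmx A)].

Section Abelianization.
Variable G : pred M2.
Hypothesis subG : is_subgroup G.

Lemma subgroup_SL2 A : G A -> inSL2 A. Proof. by case: subG => h _ _ _; apply: h. Qed.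
Lemma subgroup_unitmx A : G A -> A \in unitmx.
Proof. by move/subgroup_SL2/SL2_unitmx. Qed.
Lemma subgroup1 : G 1%:M. Proof. by case: subG. Qed.
Lemma subgroupM A B : G A -> G B -> G (A *m B). Proof. by case: subG => _ _ h _; apply: h. Qed.
Lemma subgroupV A : G A -> G (invmx A). Proof. by case: subG => _ _ _ h; apply: h. Qed.

Lemma subgroupMMV A B C : G A -> G B -> G C -> G (A *m B *m invmx C).
Proof. by move=> GA GB GC; do 2?apply: subgroupM => //; apply: subgroupV. Qed.

Lemma commsub_subgroup y : in_commsub G y -> G y.
Proof.
elim=> [|a b y' Ga Gb _ Gy']; first exact: subgroup1.
by rewrite /commg2; repeat apply: subgroupM => //; apply: subgroupV.
Qed.

Lemma commsub_mul y z : in_commsub G y -> in_commsub G z -> in_commsub G (y *m z).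
Proof.
elim=> [|a b y' Ga Gb _ IH] Cz; first by rewrite mul1mx.
by rewrite -mulmxA; apply: commsubM => //; apply: IH.
Qed.

Lemma commsub_commg2 a b : G a -> G b -> in_commsub G (commg2 a b).
Proof. by move=> Ga Gb; rewrite -[commg2 a b]mulmx1; apply: commsubM => //; constructor. Qed.

Lemma commg2V a b : a \in unitmx -> b \in unitmx -> invmx (commg2 a b) = commg2 b a.
Proof.
move=> Ua Ub; apply: invmx_eq_rinv.
  by rewrite /commg2 !unitmx_mul !unitmx_inv Ua Ub.
by rewrite /commg2 !mulmxA (mulmxK Ub) (mulmxK Ua) (mulmxKV Ub) (mulVmx Ua).
Qed.

Lemma commsubV y : in_commsub G y -> in_commsub G (invmx y).
Proof.
elim=> [|a b y' Ga Gb Cy' IH]; first by rewrite invmx1; constructor.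
have Ua := subgroup_unitmx Ga; have Ub := subgroup_unitmx Gb.
rewrite invmx_mul; first last.
- exact/subgroup_unitmx/commsub_subgroup.
- by rewrite /commg2 !unitmx_mul !unitmx_inv Ua Ub.
by rewrite commg2V //; apply: commsub_mul => //; apply: commsub_commg2.
Qed.

Lemma commsub_conj z y : G z -> in_commsub G y -> in_commsub G (z *m y *m invmx z).
Proof.
move=> Gz; have Uz := subgroup_unitmx Gz.
elim=> [|a b y' Ga Gb _ IH]; first by rewrite mulmx1 mulmxV //; constructor.
have Ua := subgroup_unitmx Ga; have Ub := subgroup_unitmx Gb.
have -> : z *m (commg2 a b *m y') *m invmx z =
    commg2 (z *m a *m invmx z) (z *m b *m invmx z) *m (z *m y' *m invmx z).
  by rewrite /commg2 !invmx_conj // !mulmxA !(mulmxKV Uz).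
by apply: commsubM => //; apply: subgroupMMV.
Qed.

Lemma ab_eq_sym x y : G x -> G y -> ab_eq G x y -> ab_eq G y x.
Proof.
move=> Gx Gy /commsubV; rewrite /ab_eq invmx_mul ?unitmx_inv ?subgroup_unitmx //.
by rewrite invmxK.
Qed.

Lemma ab_eq_trans x y w : G y -> ab_eq G x y -> ab_eq G y w -> ab_eq G x w.
Proof.
move=> Gy Cxy Cyw; rewrite /ab_eq.
by rewrite -[x](mulmxKV (subgroup_unitmx Gy)) -!mulmxA mulmxA; apply: commsub_mul.
Qed.

Lemma ab_eq_conj z w : G z -> G w -> ab_eq G (z *m w *m invmx z) w.
Proof.
move=> Gz Gw; rewrite /ab_eq.
have -> : z *m w *m invmx z *m invmx w = commg2 (invmx z) (invmx w).
  by rewrite /commg2 !invmxK.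
by apply: commsub_commg2; apply: subgroupV.
Qed.

Lemma ab_eq_mul a a' b b' : G a -> G a' -> G b -> G b' ->
  ab_eq G a a' -> ab_eq G b b' -> ab_eq G (a *m b) (a' *m b').
Proof.
move=> Ga Ga' Gb Gb' Caa' Cbb'; rewrite /ab_eq.
have Ua := subgroup_unitmx Ga.
rewrite invmx_mul ?subgroup_unitmx //.
have -> : a *m b *m (invmx b' *m invmx a') =
    (a *m (b *m invmx b') *m invmx a) *m (a *m invmx a').
  by rewrite !mulmxA (mulmxKV Ua).
by apply: commsub_mul => //; apply: commsub_conj.
Qed.

End Abelianization.

Section Homomorphism.
Variables (H G : pred M2) (f : M2 -> M2).
Hypotheses (subH : is_subgroup H) (subG : is_subgroup G).
Hypothesis f_in : forall A, H A -> G (f A).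
Hypothesis fM : forall A B, H A -> H B -> f (A *m B) = f A *m f B.
Hypothesis fV : forall A, H A -> f (invmx A) = invmx (f A).

Lemma commsub_hom y : in_commsub H y -> in_commsub G (f y).
Proof.
elim=> [|a b y' Ha Hb Cy' IH].
  have H1 := subgroup1 subH; have U1 := subgroup_unitmx subG (f_in H1).
  by rewrite -[f _](mulmxK U1) -fM // mulmx1 (mulmxV U1); constructor.
have Hc := commsub_subgroup subH (commsub_commg2 Ha Hb).
have Hy' := commsub_subgroup subH Cy'.
have HaV := subgroupV subH Ha; have HbV := subgroupV subH Hb.
rewrite fM // /commg2 !fM ?fV //; try by repeat apply: subgroupM.
by apply: commsubM => //; apply: f_in.
Qed.

Lemma ab_eq_hom X Y : H X -> H Y -> ab_eq H X Y -> ab_eq G (f X) (f Y).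
Proof.
move=> HX HY /commsub_hom; rewrite /ab_eq fM ?fV //.
exact: subgroupV.
Qed.

End Homomorphism.

Section IndexTwoTransfer.
Variables (G H : pred M2) (ev : M2 -> bool).
Hypothesis subG : is_subgroup G.
Hypothesis ev_mul : forall A B, G A -> G B -> ev (A *m B) = (ev A == ev B).
Hypothesis HE : forall A, H A = G A && ev A.
Hypothesis ev_surj : exists2 u, G u & ~~ ev u.

Lemma ev1 : ev 1%:M.
Proof.
have G1 := subgroup1 subG.
by have := ev_mul G1 G1; rewrite mulmx1; case: (ev _).
Qed.

Lemma ev_inv A : G A -> ev (invmx A) = ev A.
Proof.
move=> GA; have := ev_mul GA (subgroupV subG GA).
by rewrite (mulmxV (subgroup_unitmx subG GA)) ev1; case: (ev A); case: (ev _).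
Qed.

Lemma ev_MMV a b c : G a -> G b -> G c ->
  ev (a *m b *m invmx c) = ((ev a == ev b) == ev c).
Proof.
move=> Ga Gb Gc.
by rewrite ev_mul ?(subgroupM subG) ?(subgroupV subG) // ev_mul // ev_inv.
Qed.

Lemma kernel_MMV a b c : G a -> G b -> G c -> ((ev a == ev b) == ev c) ->
  H (a *m b *m invmx c).
Proof. by move=> Ga Gb Gc e; rewrite HE subgroupMMV // ev_MMV. Qed.

Lemma kernel_subgroup : is_subgroup H.
Proof.
split=> [A||A B|A]; rewrite ?HE.
- by case/andP=> /(subgroup_SL2 subG).
- by rewrite (subgroup1 subG) ev1.
- by case/andP=> GA eA /andP [GB eB]; rewrite (subgroupM subG) // ev_mul // eA eB.
- by case/andP=> GA eA; rewrite (subgroupV subG) // ev_inv.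
Qed.

Lemma index2_transversal T : right_transversal G H T ->
  exists x1 x2, [/\ T = [:: x1; x2], G x1, G x2 & ev x1 = ~~ ev x2].
Proof.
case=> allT cnt; case: ev_surj => u Gu evu.
have count_ev : count (fun g => H (1%:M *m invmx g)) T = count ev T.
  apply: eq_in_count => g /(allP allT) Gg /=.
  by rewrite mul1mx HE (subgroupV subG) // ev_inv.
have count_odd : count (fun g => H (u *m invmx g)) T = count (predC ev) T.
  apply: eq_in_count => g /(allP allT) Gg /=.
  have GgV := subgroupV subG Gg.
  rewrite HE (subgroupM subG) // ev_mul // ev_inv //.
  by move: evu; case: (ev u); case: (ev g).
have c1 := cnt _ (subgroup1 subG); rewrite count_ev in c1.
have size2 : size T = 2%N.
  by rewrite -(count_predC ev) c1 -count_odd cnt.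
case: T allT size2 c1 {cnt count_ev count_odd} => [|x1 [|x2 [|? ?]]] //=.
case/and3P=> G1 G2 _ _; rewrite addn0 => c1; exists x1, x2; split=> //.
by move: c1; case: (ev x1); case: (ev x2).
Qed.

Lemma transfer_rep_index2 x1 x2 y : G x1 -> G x2 -> G y -> ev x1 = ~~ ev x2 ->
  transfer_rep H [:: x1; x2] y =
  if ev y then x1 *m y *m invmx x1 *m (x2 *m y *m invmx x2)
  else x1 *m y *m invmx x2 *m (x2 *m y *m invmx x1).
Proof.
move=> G1 G2 Gy e12; rewrite /transfer_rep /= !HE !(subgroupMMV subG) // !ev_MMV // e12.
by rewrite !mulmx1; case: (ev y); case: (ev x2).
Qed.

Lemma transfer_rep_kernel T y : right_transversal G H T -> G y ->
  H (transfer_rep H T y).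
Proof.
move=> /index2_transversal [x1 [x2 [-> G1 G2 e12]]] Gy; rewrite transfer_rep_index2 //.
by case: ifP => evy; apply: (subgroupM kernel_subgroup); apply: kernel_MMV;
  rewrite // ?e12 evy; case: (ev x2).
Qed.

Section Normalizer.
Variable al : M2.
Hypothesis al_unit : al \in unitmx.
Hypothesis al_conj : forall z, G z -> G (al *m z *m invmx al).
Hypothesis ev_al_conj : forall z, G z -> ev (al *m z *m invmx al) = ev z.

Definition twist g := al *m g *m invmx al *m invmx g.

Lemma twist_kernel g : G g -> H (twist g).
Proof.
move=> Gg; have GgV := subgroupV subG Gg; have Gag := al_conj Gg.
by rewrite HE (subgroupM subG) // ev_mul // ev_al_conj // ev_inv // eqxx.
Qed.

Lemma conj_transfer_factor g z g' : g \in unitmx -> g' \in unitmx ->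
  al *m (g *m z *m invmx g') *m invmx al =
  twist g *m (g *m (al *m z *m invmx al) *m invmx g') *m invmx (twist g').
Proof.
move=> Ug Ug'.
have -> : invmx (twist g') = g' *m al *m invmx g' *m invmx al.
  apply: invmx_eq_rinv; first by rewrite !unitmx_mul !unitmx_inv al_unit Ug'.
  by rewrite !mulmxA (mulmxKV Ug') (mulmxKV al_unit) (mulmxK Ug') (mulmxV al_unit).
by rewrite /twist !mulmxA (mulmxKV Ug) (mulmxKV al_unit) (mulmxKV Ug') (mulmxKV al_unit).
Qed.

Lemma transfer_rep_conj T x : right_transversal G H T -> G x ->
  ab_eq H (transfer_rep H T (al *m x *m invmx al))
          (al *m transfer_rep H T x *m invmx al).
Proof.
move=> /index2_transversal [x1 [x2 [-> G1 G2 e12]]] Gx.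
have subH := kernel_subgroup; have Gy := al_conj Gx.
have U1 := subgroup_unitmx subG G1; have U2 := subgroup_unitmx subG G2.
have H1 := twist_kernel G1; have H2 := twist_kernel G2.
have conjM A B : al *m (A *m B) *m invmx al =
    al *m A *m invmx al *m (al *m B *m invmx al).
  by rewrite !mulmxA (mulmxKV al_unit).
rewrite !transfer_rep_index2 // ev_al_conj //.
case: ifP => evx; rewrite conjM !conj_transfer_factor //.
  have HA g : G g -> H (g *m (al *m x *m invmx al) *m invmx g).
    by move=> Gg; apply: kernel_MMV; rewrite // ev_al_conj // evx; case: (ev g).
  have HA1 := HA _ G1; have HA2 := HA _ G2.
  have HB1 := subgroupMMV subH H1 HA1 H1; have HB2 := subgroupMMV subH H2 HA2 H2.
  by apply: (ab_eq_mul subH) => //; apply: (ab_eq_sym subH) => //; apply: ab_eq_conj.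
have cancel_mid (a b u d e : M2) : u \in unitmx ->
    a *m b *m invmx u *m (u *m d *m e) = a *m (b *m d) *m e.
  by move=> Uu; rewrite !mulmxA (mulmxKV Uu).
rewrite [X in ab_eq _ _ X]cancel_mid ?(subgroup_unitmx subH H2) //.
have HB : H (x1 *m (al *m x *m invmx al) *m invmx x2).
  by apply: kernel_MMV; rewrite // ev_al_conj // evx e12; case: (ev x2).
have HC : H (x2 *m (al *m x *m invmx al) *m invmx x1).
  by apply: kernel_MMV; rewrite // ev_al_conj // evx e12; case: (ev x2).
have HBC := subgroupM subH HB HC.
apply: (ab_eq_sym subH) => //; first exact: subgroupMMV.
exact: ab_eq_conj.
Qed.
End Normalizer.
End IndexTwoTransfer.

Lemma inGamma0_mk2 M a b c d :
  inGamma0 M (mk2 a b c d) <-> a * d - b * c = 1 /\ congz c 0 M%:Z.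
Proof. by rewrite /inGamma0 inSL2E !mk2E; split=> [/andP [/eqP ? /congzP]|[-> /congzP]]. Qed.

Lemma Gamma0_subgroup M : is_subgroup (inGamma0 M).
Proof.
split=> [A|||].
- by case/andP.
- by rewrite mx1_mk2 inGamma0_mk2; split; rewrite ?mulr1 ?subr0 //; congz_ring.
- move=> A B; rewrite (mk2_eta A) (mk2_eta B) mul_mk2 !inGamma0_mk2.
  case=> dA cA [dB cB]; split; last by congz_ring.
  by rewrite -[1]mulr1 -{1}dA -dB; ring.
- move=> A; rewrite (mk2_eta A) => /inGamma0_mk2 [dA cA].
  by rewrite invmx_mk2 // inGamma0_mk2; split; [rewrite -dA; ring | congz_ring].
Qed.

Definition upper_even (A : M2) : bool := (A i0 i1 == 0 %[mod 2])%Z.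

Lemma int_parity (x : int) : exists t, x = t * 2 \/ x = 1 + t * 2.
Proof. by exists (x %/ 2)%Z; lia. Qed.

Lemma Gamma0_2_diag_odd a b c d : a * d - b * c = 1 -> congz c 0 2 ->
  congz a 1 2 /\ congz d 1 2.
Proof.
move=> det1 [k c2k]; subst c.
have [t [ea|ea]] := int_parity a; have [t' [ed|ed]] := int_parity d; subst a d; try lia.
by split; [exists t | exists t']; ring.
Qed.

Lemma upper_even_mul A B : inGamma0 2 A -> inGamma0 2 B ->
  upper_even (A *m B) = (upper_even A == upper_even B).
Proof.
rewrite /inGamma0 /upper_even !inSL2E (mk2_eta A) (mk2_eta B) mul_mk2 !mk2E.
case/andP=> /eqP detA /congzP /(Gamma0_2_diag_odd detA) [[t ->] _].
case/andP=> /eqP detB /congzP /(Gamma0_2_diag_odd detB) [_ [t' ->]].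
have [u [->|->]] := int_parity (A i0 i1).
  by have [u' [->|->]] := int_parity (B i0 i1); lia.
by have [u' [->|->]] := int_parity (B i0 i1); lia.
Qed.

Lemma tconj_mk2 a b c d : tconj (mk2 a b c d) = mk2 a (b %/ 2)%Z (c * 2) d.
Proof. by rewrite /tconj !mk2E. Qed.

Lemma tconj_mul A B : upper_even A -> upper_even B ->
  tconj (A *m B) = tconj A *m tconj B.
Proof.
rewrite /upper_even (mk2_eta A) (mk2_eta B) !mk2E.
move: (A i0 i0) (A i0 i1) (A i1 i0) (A i1 i1) (B i0 i0) (B i0 i1) (B i1 i0) (B i1 i1).
move=> a b c d a' b' c' d' /congzP [k ->] /congzP [k' ->].
rewrite mul_mk2 !tconj_mk2 mul_mk2 !add0r.
have -> : a * (k' * 2) + k * 2 * d' = (a * k' + k * d') * 2 by ring.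
by rewrite !mulzK //; congr mk2; ring.
Qed.

Lemma tconj_inv A : inSL2 A -> upper_even A -> tconj (invmx A) = invmx (tconj A).
Proof.
rewrite inSL2E /upper_even (mk2_eta A) !mk2E.
move: (A i0 i0) (A i0 i1) (A i1 i0) (A i1 i1) => a b c d /eqP det1 /congzP [k eb].
subst b; rewrite add0r in det1 *.
have det1' : a * d - k * (c * 2) = 1 by lia.
rewrite (invmx_mk2 det1) !tconj_mk2 mulzK // (invmx_mk2 det1').
rewrite (_ : - (k * 2) = - k * 2); last by ring.
by rewrite mulzK //; congr mk2; ring.
Qed.

Section Phi.
Variables (N r s : nat).
Hypothesis s_le_r : (s <= r)%N.

Local Notation n := (N%:Z).
Local Notation P := ((2 ^ s)%N%:Z).
Local Notation Q := ((2 ^ (r - s))%N%:Z).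
Local Notation Phi := (inPhi N r s).

Lemma pow2_r : ((2 ^ r)%N%:Z) = P * Q.
Proof. by rewrite -PoszM -expnD subnKC. Qed.

Definition phi_entries (a b c d : int) : Prop :=
  [/\ a * d - b * c = 1, congz c 0 (n * P), congz a 1 (n * P),
      congz d 1 (n * P) & congz c 0 (P * Q)].

Lemma inPhi_mk2 a b c d : Phi (mk2 a b c d) <-> phi_entries a b c d.
Proof.
rewrite /inPhi /inGamma1 /inGamma0 !inSL2E !mk2E PoszM pow2_r; split.
  by case/andP=> /and4P [/eqP ? /congzP ? /congzP ? /congzP ?] /andP [_ /congzP ?].
case=> det1 ? ? ? ?; rewrite det1 eqxx.
by apply/andP; split; [apply/and4P; split | apply/andP; split]; try exact/congzP.
Qed.

Lemma inPhiP A : Phi A <-> phi_entries (A i0 i0) (A i0 i1) (A i1 i0) (A i1 i1).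
Proof. by rewrite {1}(mk2_eta A); exact: inPhi_mk2. Qed.

Lemma Phi_subgroup : is_subgroup Phi.
Proof.
split=> [A|||].
- by case/andP=> /and4P [].
- by rewrite mx1_mk2 inPhi_mk2; split; rewrite ?mulr1 ?subr0 //; congz_ring.
- move=> A B /inPhiP [dA cA aA eA fA] /inPhiP [dB cB aB eB fB].
  rewrite (mk2_eta A) (mk2_eta B) mul_mk2 inPhi_mk2; split; try congz_ring.
  by rewrite -[1]mulr1 -{1}dA -dB; ring.
- move=> A /inPhiP [dA cA aA eA fA]; rewrite (mk2_eta A) invmx_mk2 // inPhi_mk2.
  by split; try congz_ring; rewrite -dA; ring.
Qed.

Lemma Phi_Gamma0up2E A : (Phi A && inGamma0up2 A) = Phi A && upper_even A.
Proof.
by case PA: (Phi A); rewrite //= /inGamma0up2 (subgroup_SL2 Phi_subgroup PA).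
Qed.

Lemma Phi_upper_odd : exists2 u, Phi u & ~~ upper_even u.
Proof.
exists (mk2 1 1 0 1); last by rewrite /upper_even mk2E.
by rewrite inPhi_mk2; split; rewrite ?mulr1 ?subr0 //; congz_ring.
Qed.

Lemma tconj_Phi A : Phi A -> upper_even A -> Phi (tconj A).
Proof.
move=> /inPhiP [det1 ? ? ? ?] /congzP [k eb].
rewrite (mk2_eta A) tconj_mk2 inPhi_mk2 eb add0r mulzK //.
rewrite eb add0r in det1; split; try congz_ring.
lia.
Qed.

Definition alpha_entries (a b c d : int) : Prop :=
  [/\ a * d - b * c = 1, congz c 0 (n * (P * Q * 2)) & congz b 0 2].

Lemma alpha_entries_cong a b c d : alpha_entries a b c d ->
  [/\ congz c 0 (n * P), congz c 0 (P * Q) & congz (a * d) 1 (n * P)].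
Proof.
case=> det1 [k ck] _; split.
- by exists (k * Q * 2); rewrite ck; ring.
- by exists (k * n * 2); rewrite ck; ring.
- by exists (b * k * Q * 2); rewrite (_ : a * d = 1 + b * c) ?ck; [ring | lia].
Qed.

Lemma conj_Phi_mk2 a b c d z : alpha_entries a b c d -> Phi z ->
  Phi (mk2 a b c d *m z *m invmx (mk2 a b c d)).
Proof.
move=> al_e; have [cnP cPQ adnP] := alpha_entries_cong al_e; case: al_e => det1 _ _.
rewrite (mk2_eta z) => /inPhi_mk2.
move: (z i0 i0) (z i0 i1) (z i1 i0) (z i1 i1) => p q u v [dz uz pz vz fz].
rewrite invmx_mk2 // !mul_mk2 inPhi_mk2; split.
- match goal with |- ?x * ?y - ?z * ?w = 1 =>
    have -> : x * y - z * w = (a * d - b * c) * (p * v - q * u) * (a * d - b * c) by ring end.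
  by rewrite det1 dz !mulr1.
- by congz_ring.
- by apply: (@congz_trans _ (a * d)); first congz_ring.
- by apply: (@congz_trans _ (a * d)); first congz_ring.
- by congz_ring.
Qed.

Lemma tconj_mk2_mulV_Phi a b c d : alpha_entries a b c d ->
  Phi (tconj (mk2 a b c d) *m invmx (mk2 a b c d)).
Proof.
move=> al_e; have [cnP cPQ adnP] := alpha_entries_cong al_e.
case: al_e => det1 _ [m eb]; subst b; rewrite add0r in det1 *.
rewrite invmx_mk2 // tconj_mk2 mulzK // mul_mk2 inPhi_mk2; split.
- match goal with |- ?x * ?y - ?z * ?w = 1 =>
    have -> : x * y - z * w = (a * d - m * (c * 2)) * (a * d - m * 2 * c) by ring end.
  by rewrite det1 mulr1; lia.
- by congz_ring.
- by apply: (@congz_trans _ (a * d)); first congz_ring.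
- by apply: (@congz_trans _ (a * d)); first congz_ring.
- by congz_ring.
Qed.

Section PositiveLevel.
Hypothesis s_gt0 : (0 < s)%N.

Lemma Phi_Gamma0_2 A : Phi A -> inGamma0 2 A.
Proof.
move=> PA; rewrite /inGamma0 (subgroup_SL2 Phi_subgroup PA); apply/congzP.
have /inPhiP [_ [k ->] _ _ _] := PA; exists (k * n * (2 ^ s.-1)%N%:Z).
by rewrite -{1}(prednK s_gt0) expnS PoszM; ring.
Qed.

Lemma upper_even_Phi_mul A B : Phi A -> Phi B ->
  upper_even (A *m B) = (upper_even A == upper_even B).
Proof. by move=> PA PB; apply: upper_even_mul; apply: Phi_Gamma0_2. Qed.

Local Notation Phi02 := (fun A => Phi A && inGamma0up2 A).

Lemma Phi02_subgroup : is_subgroup Phi02.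
Proof. exact: (kernel_subgroup Phi_subgroup upper_even_Phi_mul Phi_Gamma0up2E). Qed.

Lemma tconj_Phi02 A : Phi02 A -> Phi (tconj A).
Proof. by rewrite /= Phi_Gamma0up2E => /andP []; apply: tconj_Phi. Qed.

Lemma ab_eq_tconj X Y : Phi02 X -> Phi02 Y -> ab_eq Phi02 X Y ->
  ab_eq Phi (tconj X) (tconj Y).
Proof.
apply: (ab_eq_hom Phi02_subgroup Phi_subgroup) => [A|A B|A]; rewrite Phi_Gamma0up2E.
- by case/andP; apply: tconj_Phi.
- by case/andP=> _ evA; rewrite Phi_Gamma0up2E => /andP [_ evB]; apply: tconj_mul.
- by case/andP=> PA evA; apply: tconj_inv => //; apply: (subgroup_SL2 Phi_subgroup).
Qed.

Section Alpha.
Hypothesis oddN : odd N.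
Variables (delta : int) (al : M2).
Hypothesis al_adm : nebentypus_alpha N r delta al.

Lemma alpha_entriesP :
  alpha_entries (al i0 i0) (al i0 i1) (al i1 i0) (al i1 i1).
Proof.
have pow2_r1 : ((2 ^ r.+1)%N%:Z) = P * Q * 2 by rewrite expnS mulnC PoszM pow2_r.
move: al_adm.
rewrite /nebentypus_alpha /inGamma1 /inGamma0 /inGamma0up2 !inSL2E PoszM pow2_r1.
case/and4P=> /and4P [/eqP det1 /congzP [k c4N] _ _] /andP [_ c2r] /andP [_ /congzP b2] _.
split=> //; apply/congzP; rewrite eqz_mod_dvd subr0 Gauss_dvdz.
- apply/andP; split; first by apply/dvdzP; exists (k * 4); rewrite c4N; ring.
  by move: c2r; rewrite eqz_mod_dvd subr0.
- rewrite -pow2_r1 coprimezE /=; apply: coprimeXr.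
  by rewrite coprime_sym coprime2n.
Qed.

Lemma alpha_unitmx : al \in unitmx.
Proof.
by case: alpha_entriesP => det1 _ _; apply: SL2_unitmx; rewrite inSL2E det1.
Qed.

Lemma alpha_conj_Phi z : Phi z -> Phi (al *m z *m invmx al).
Proof. by rewrite (mk2_eta al); apply: conj_Phi_mk2; exact: alpha_entriesP. Qed.

Lemma alpha_Gamma0_2_upper_even : inGamma0 2 al /\ upper_even al.
Proof.
case: alpha_entriesP => det1 [k ck] b2; rewrite (mk2_eta al) inGamma0_mk2.
split; last by rewrite /upper_even mk2E; apply/congzP.
by split=> //; exists (k * n * P * Q); rewrite ck; ring.
Qed.

Lemma upper_even_alpha_conj z : Phi z -> upper_even (al *m z *m invmx al) = upper_even z.
Proof.
have [al0 al_even] := alpha_Gamma0_2_upper_even.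
move=> /Phi_Gamma0_2 z0; rewrite (ev_MMV (Gamma0_subgroup 2) upper_even_mul) //.
by rewrite al_even; case: (upper_even z).
Qed.

Lemma alpha_conj_Phi02 A : Phi02 A -> Phi02 (al *m A *m invmx al).
Proof.
rewrite /= !Phi_Gamma0up2E => /andP [PA evA].
by rewrite alpha_conj_Phi // upper_even_alpha_conj.
Qed.

Lemma tconj_alpha_conj A : Phi02 A ->
  ab_eq Phi (tconj (al *m A *m invmx al)) (al *m tconj A *m invmx al).
Proof.
rewrite /= Phi_Gamma0up2E => /andP [PA evA]; have [al0 al_even] := alpha_Gamma0_2_upper_even.
have Ual := alpha_unitmx.
have Pb : Phi (tconj al *m invmx al).
  by rewrite (mk2_eta al); apply: tconj_mk2_mulV_Phi; exact: alpha_entriesP.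
have Utal : tconj al \in unitmx.
  by rewrite -(mulmxKV Ual (tconj al)) unitmx_mul Ual (subgroup_unitmx Phi_subgroup Pb).
have A0 := Phi_Gamma0_2 PA.
have evalA : upper_even (al *m A) by rewrite upper_even_mul // al_even evA.
have evalV : upper_even (invmx al) by rewrite (ev_inv (Gamma0_subgroup 2) upper_even_mul).
have SLal := subgroup_SL2 (Gamma0_subgroup 2) al0.
have -> : tconj (al *m A *m invmx al) =
    (tconj al *m invmx al) *m (al *m tconj A *m invmx al) *m invmx (tconj al *m invmx al).
  rewrite invmx_mul ?unitmx_inv // invmxK !mulmxA !(mulmxKV Ual).
  by rewrite tconj_mul // tconj_mul // tconj_inv.
apply: (ab_eq_conj Phi_subgroup) => //.
exact/alpha_conj_Phi/tconj_Phi.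
Qed.
Variable T : seq M2.
Hypothesis transT : right_transversal Phi Phi02 T.

Lemma transfer_Phi02 y : Phi y -> Phi02 (transfer_rep Phi02 T y).
Proof.
exact: (transfer_rep_kernel Phi_subgroup upper_even_Phi_mul Phi_Gamma0up2E
  Phi_upper_odd transT).
Qed.

Lemma atkinU_rep_alpha_conj x : Phi x ->
  ab_eq Phi (atkinU_rep N r s T (al *m x *m invmx al))
            (al *m atkinU_rep N r s T x *m invmx al).
Proof.
move=> Px; rewrite /atkinU_rep.
have Ptr := transfer_Phi02 Px; have Ptr' := transfer_Phi02 (alpha_conj_Phi Px).
have Pconj := alpha_conj_Phi02 Ptr.
apply: (ab_eq_trans Phi_subgroup (tconj_Phi02 Pconj)); last exact: tconj_alpha_conj.
apply: ab_eq_tconj => //.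
exact: (transfer_rep_conj Phi_subgroup upper_even_Phi_mul Phi_Gamma0up2E Phi_upper_odd
  alpha_unitmx alpha_conj_Phi upper_even_alpha_conj transT).
Qed.

End Alpha.

End PositiveLevel.

End Phi.

Theorem lemma3p5 (N r s : nat) :
  odd N -> (0 < N)%N -> (2 <= s)%N -> (s <= r)%N ->
  forall (delta : int), (delta == 1 %[mod 4])%Z ->
  forall (alpha : M2), nebentypus_alpha N r delta alpha ->
  forall (T : seq M2),
    right_transversal (inPhi N r s)
      (fun A => inPhi N r s A && inGamma0up2 A) T ->
  forall x : M2, inPhi N r s x ->
    ab_eq (inPhi N r s)
      (atkinU_rep N r s T (alpha *m x *m invmx alpha))
      (alpha *m atkinU_rep N r s T x *m invmx alpha).
Proof.
move=> oddN _ s_ge2 s_le_r delta _ al al_adm T transT x Px.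
exact: (atkinU_rep_alpha_conj s_le_r (ltnW s_ge2) oddN al_adm transT Px).
Qed.
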